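(* Let $K$ be a ramified quadratic extension of $\mathbb{Q}_2$, $d=2m$ with $m$ odd, $m\ge3$, and $f=a_1x_1^d+\dots+a_sx_s^d$ with all $a_i\in\mathcal{O}\setminus\{0\}$. Suppose $f$ has six distinct variables at a common level that can be split into three disjoint pairs, each pair consisting of two variables with the same $\pi$-coefficient. Then $f$ has a nontrivial zero in $K$. In particular, if $f$ has seven variables at the same level, then $f$ has a nontrivial zero in $K$.
   Context: $\mathcal{O}$ is the ring of integers of $K$ and $\pi$ the uniformizer: $\pi=\sqrt{2},\sqrt{-2},\sqrt{10},\sqrt{-10},1+\sqrt{-1},1+\sqrt{-5}$ for $K=\mathbb{Q}_2(\sqrt2),\mathbb{Q}_2(\sqrt{-2}),\mathbb{Q}_2(\sqrt{10}),\mathbb{Q}_2(\sqrt{-10}),\mathbb{Q}_2(\sqrt{-1}),\mathbb{Q}_2(\sqrt{-5})$ respectively. Each unit $u$ has a unique expansion $u=c_0+c_1\pi+c_2\pi^2+\cdots$ with $c_j\in\{0,1\}$, $c_0=1$. Writing $a_i=\pi^r u$ with $u$ a unit, the variable $x_i$ is at level $r\bmod d$ (levels are residues modulo $d$), and its $\pi$-coefficient is $c_1$ of $u$. A nontrivial zero is a point of $K^s$, not all coordinates zero, where $f$ vanishes. *)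

From HB Require Import structures.
From mathcomp Require Import all_boot all_order all_algebra.
Set Implicit Arguments. Unset Strict Implicit. Unset Printing Implicit Defensive.
Import GRing.Theory Num.Theory.
Local Open Scope ring_scope.

(* K = Q_2(sqrt D) for D in {2,-2,10,-10,-1,-5}.  In all six cases
   O = Z_2[sqrt D] = Z_2 + Z_2 sqrt D (D is not 1 mod 4).
   Elements of Z[sqrt D] are pairs (p,q) meaning p + q sqrt D. *)
Definition zsq := (int * int)%type.
Definition zadd (x y : zsq) : zsq := (x.1 + y.1, x.2 + y.2).
Definition zmul (D : int) (x y : zsq) : zsq :=
  (x.1 * y.1 + D * x.2 * y.2, x.1 * y.2 + x.2 * y.1).
Definition zone : zsq := (1, 0).
Definition zzero : zsq := (0, 0).
Fixpoint zexp (D : int) (x : zsq) (r : nat) : zsq :=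
  match r with 0%N => zone | r'.+1 => zmul D x (zexp D x r') end.

(* congruence modulo 2^n O = 2^n Z + 2^n Z sqrt D *)
Definition zcong (n : nat) (x y : zsq) : bool :=
  ((2 ^+ n)%R %| x.1 - y.1)%Z && ((2 ^+ n)%R %| x.2 - y.2)%Z.

(* O = inverse limit of Z[sqrt D]/2^n : compatible sequences of approximants *)
Definition compat (x : nat -> zsq) := forall n : nat, zcong n (x n) (x n.+1).
Record Oelt := { app :> nat -> zsq; app_compat : compat app }.

(* equality in O (ring operations are computed on approximants) *)
Definition Oeq (x y : nat -> zsq) := forall n : nat, zcong n (x n) (y n).
Definition Ononzero (x : Oelt) := ~ Oeq x (fun _ => zzero).

Definition ramD : seq int := [:: 2; -2; 10; -10; -1; -5].
Definition unif (D : int) : zsq :=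
  if (D == -1) || (D == -5) then (1, 1) else (0, 1).

(* a = pi^r u with u = 1 + c pi + pi^2 w (w in O), r mod d = l :
   the variable with coefficient a is at level l with pi-coefficient c *)
Definition level_coef (D : int) (d : nat) (a : Oelt) (l : nat) (c : bool) :=
  exists (r : nat) (w : Oelt), (r %% d)%N = l /\
    Oeq a (fun n => zmul D (zexp D (unif D) r)
              (zadd (zadd zone (if c then unif D else zzero))
                    (zmul D (zexp D (unif D) 2) (w n)))).

Definition at_level (D : int) (d : nat) (a : Oelt) (l : nat) :=
  exists c : bool, level_coef D d a l c.

Definition formval (D : int) (d s : nat) (a x : 'I_s -> Oelt) (n : nat) : zsq :=
  \big[zadd/zzero]_(i < s) zmul D (a i n) (zexp D (x i n) d).

(* nontrivial zero (in O^s; equivalent to K^s by homogeneity) *)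
Definition nontriv_zero (D : int) (d s : nat) (a : 'I_s -> Oelt) :=
  exists x : 'I_s -> Oelt,
    (exists i, Ononzero (x i)) /\ Oeq (formval D d a x) (fun _ => zzero).

From HB Require Import structures.
From mathcomp Require Import all_boot all_order all_algebra.
From mathcomp Require Import ring.
Set Implicit Arguments. Unset Strict Implicit. Unset Printing Implicit Defensive.
Import GRing.Theory.
Local Open Scope ring_scope.

(* Write each of the six coefficients as pi^r u with r = l mod 2m and u a unit, u = 1 + c pi mod 2.
   Multiplying x_k by a suitable power of pi puts the same power of pi in front of every term, so
   it suffices to solve sum_k u_k x_k^(2m) = 0 with some x_k a unit.  Modulo 8 this is a finite
   problem depending only on D, on m mod 4 (the units of O/8O have exponent dividing 8) and on the
   residues of the u_k; a computation solves it whenever the u_k agree mod 2 in pairs.  Hensel's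
   lemma lifts such a solution: at a unit x the derivative 2m u x^(2m-1) has valuation v(2), and
   the solution holds modulo 8 = 2^(2*1+1).  For seven variables at one level, two of any three
   share their pi-coefficient, which gives three disjoint pairs. *)

(* Z[sqrt D] needs a new name: int * int already carries the componentwise ring structure. *)
Definition zsqrt (D : int) : Type := zsq.
HB.instance Definition _ D := Choice.on (zsqrt D).

Definition zopp (x : zsq) : zsq := (- x.1, - x.2).

Section ZsqrtRing.
Variable D : int.

Lemma zaddA : associative (zadd : zsqrt D -> zsqrt D -> zsqrt D).
Proof. by move=> [? ?] [? ?] [? ?]; rewrite /zadd /=; congr pair; ring. Qed.
Lemma zaddC : commutative (zadd : zsqrt D -> zsqrt D -> zsqrt D).
Proof. by move=> [? ?] [? ?]; rewrite /zadd /=; congr pair; ring. Qed.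
Lemma zadd0 : left_id (zzero : zsqrt D) zadd.
Proof. by move=> [? ?]; rewrite /zadd /=; congr pair; ring. Qed.
Lemma zaddN : left_inverse (zzero : zsqrt D) zopp zadd.
Proof. by move=> [? ?]; rewrite /zadd /=; congr pair; ring. Qed.
HB.instance Definition _ := GRing.isZmodule.Build (zsqrt D) zaddA zaddC zadd0 zaddN.

Lemma zmulA : associative (zmul D : zsqrt D -> zsqrt D -> zsqrt D).
Proof. by move=> [? ?] [? ?] [? ?]; rewrite /zmul /=; congr pair; ring. Qed.
Lemma zmulC : commutative (zmul D : zsqrt D -> zsqrt D -> zsqrt D).
Proof. by move=> [? ?] [? ?]; rewrite /zmul /=; congr pair; ring. Qed.
Lemma zmul1 : left_id (zone : zsqrt D) (zmul D).
Proof. by move=> [? ?]; rewrite /zmul /=; congr pair; ring. Qed.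
Lemma zmulDl : left_distributive (zmul D : zsqrt D -> zsqrt D -> zsqrt D) zadd.
Proof. by move=> [? ?] [? ?] [? ?]; rewrite /zmul /zadd /=; congr pair; ring. Qed.
Lemma zone_neq0 : (zone : zsqrt D) != zzero. Proof. by []. Qed.
HB.instance Definition _ :=
  GRing.Zmodule_isComNzRing.Build (zsqrt D) zmulA zmulC zmul1 zmulDl zone_neq0.

Lemma zexpE (x : zsqrt D) n : zexp D x n = x ^+ n.
Proof. by elim: n => //= n ->; rewrite exprS. Qed.

Lemma zsqrt_exp2E n : (2 : zsqrt D) ^+ n = (2 ^+ n, 0) :> zsq.
Proof.
elim: n => // n IH; rewrite exprS IH.
by congr pair; rewrite /= ?exprS; ring.
Qed.

Lemma zsqrt_mul_intE (c : int) (x : zsqrt D) : ((c, 0) : zsqrt D) * x = (c * x.1, c * x.2) :> zsq.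
Proof. by case: x => ? ?; congr pair; rewrite /=; ring. Qed.

End ZsqrtRing.

Definition eqmod2 (D : int) (n : nat) (x y : zsqrt D) : bool := zcong n x y.
Arguments eqmod2 : clear implicits.

Section Congruence.
Variable D : int.
Implicit Types x y z : zsqrt D.

Lemma eqmod2P n x y : reflect (exists q, x = y + 2 ^+ n * q) (eqmod2 D n x y).
Proof.
apply: (iffP andP) => [[/dvdzP [q1 E1] /dvdzP [q2 E2]] | [q ->]].
  exists (q1, q2); rewrite -[_ * _]/(_ : zsq) zsqrt_exp2E zsqrt_mul_intE.
  case: x y E1 E2 => [x1 x2] [y1 y2] /= E1 E2.
  by congr pair; [rewrite [_ * q1]mulrC -E1 | rewrite [_ * q2]mulrC -E2] => /=; ring.
rewrite -[_ * _]/(_ : zsq) zsqrt_exp2E zsqrt_mul_intE /=.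
by split; apply/dvdzP; [exists q.1 | exists q.2]; ring.
Qed.

Lemma eqmod2_refl n x : eqmod2 D n x x.
Proof. by apply/eqmod2P; exists 0; ring. Qed.
Lemma eqmod2_sym n x y : eqmod2 D n x y -> eqmod2 D n y x.
Proof. by move/eqmod2P=> [q ->]; apply/eqmod2P; exists (- q); ring. Qed.
Lemma eqmod2_trans n x y z : eqmod2 D n x y -> eqmod2 D n y z -> eqmod2 D n x z.
Proof.
by move/eqmod2P=> [q ->] /eqmod2P [q' ->]; apply/eqmod2P; exists (q + q'); ring.
Qed.
Lemma eqmod2D n x y x' y' :
  eqmod2 D n x x' -> eqmod2 D n y y' -> eqmod2 D n (x + y) (x' + y').
Proof.
by move/eqmod2P=> [q ->] /eqmod2P [q' ->]; apply/eqmod2P; exists (q + q'); ring.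
Qed.
Lemma eqmod2M n x y x' y' :
  eqmod2 D n x x' -> eqmod2 D n y y' -> eqmod2 D n (x * y) (x' * y').
Proof.
move/eqmod2P=> [q ->] /eqmod2P [q' ->]; apply/eqmod2P.
by exists (q * y' + x' * q' + 2 ^+ n * q * q'); ring.
Qed.
Lemma eqmod2X n x x' k : eqmod2 D n x x' -> eqmod2 D n (x ^+ k) (x' ^+ k).
Proof.
move=> E; elim: k => [|k IH]; first exact: eqmod2_refl.
by rewrite !exprS; apply: eqmod2M.
Qed.
Lemma eqmod2_leq k n x y : (k <= n)%N -> eqmod2 D n x y -> eqmod2 D k x y.
Proof.
move=> le_kn /eqmod2P [q ->]; apply/eqmod2P; exists (2 ^+ (n - k) * q).
by rewrite mulrA -exprD subnKC.
Qed.

Lemma eqmod2_exp2_cancel k x : eqmod2 D k.+1 (2 ^+ k * x) 0 -> eqmod2 D 1 x 0.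
Proof.
rewrite /eqmod2 /zcong zsqrt_exp2E zsqrt_mul_intE /= !subr0 exprS.
have nz : (2 ^+ k : int) != 0 by rewrite expf_neq0.
by rewrite expr1 [2 * _]mulrC !dvdz_mul2l.
Qed.

End Congruence.

(* O/2O = F_2[pi]/(pi^2): the units 1, 1 + pi square to 1, the non-units 0, pi square to 0. *)
Definition zunit (D : int) (x : zsqrt D) : bool := eqmod2 D 1 (x * x) 1.

Section Units.
Variable D : int.
Implicit Types x y : zsqrt D.

Lemma zunit1 : zunit (1 : zsqrt D).
Proof. by rewrite /zunit mulr1 eqmod2_refl. Qed.

Lemma zunitM x y : zunit x -> zunit y -> zunit (x * y).
Proof.
move=> ux uy; rewrite /zunit -[1]mulr1 mulrACA.
exact: eqmod2M.
Qed.

Lemma zunitX x k : zunit x -> zunit (x ^+ k).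
Proof.
by move=> ux; elim: k => [|k IH]; [exact: zunit1 | rewrite exprS zunitM].
Qed.

Lemma zunit_eqmod2 x y : eqmod2 D 1 x y -> zunit x -> zunit y.
Proof. by move=> /eqmod2_sym yx; apply: eqmod2_trans (eqmod2M yx yx). Qed.

Lemma zunit_odd k : odd k -> zunit (k%:R : zsqrt D).
Proof.
move=> k_odd; rewrite -(odd_double_half k) k_odd; set h := k./2.
by apply/eqmod2P; exists (2 * h%:R ^+ 2 + 2 * h%:R); rewrite /= -addnn !natrD; ring.
Qed.

Lemma zunit_neq0 x : zunit x -> ~~ eqmod2 D 1 x 0.
Proof.
move=> ux; apply/negP => x0.
have : eqmod2 D 1 (1 : zsqrt D) 0.
  by apply: eqmod2_trans (eqmod2_sym ux) _; rewrite -(mulr0 0); apply: eqmod2M.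
by [].
Qed.

End Units.

Lemma exprD_first_order (R : comPzRingType) (x h : R) n :
  exists q, (x + h) ^+ n = x ^+ n + n%:R * x ^+ n.-1 * h + h ^+ 2 * q.
Proof.
elim: n => [|[|n] [q IH]]; first by exists 0; ring.
  by exists 0; ring.
exists (x * q + n.+1%:R * x ^+ n + h * q).
by rewrite exprS IH /= [x ^+ n.+2]exprS [x ^+ n.+1]exprS -[n.+2]addn1 natrD; ring.
Qed.

Definition zdivexp2 (k : nat) (x : zsq) : zsq := ((x.1 %/ 2 ^+ k)%Z, (x.2 %/ 2 ^+ k)%Z).

Lemma zdivexp2K D k (x : zsqrt D) : eqmod2 D k x 0 -> x = 2 ^+ k * (zdivexp2 k x : zsqrt D).
Proof.
case/andP; rewrite !subr0 -[_ * _]/(_ : zsq) zsqrt_exp2E zsqrt_mul_intE.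
by case: x => x1 x2 /= ? ?; rewrite ![2 ^+ k * _]mulrC !divzK.
Qed.

Lemma compat_leq D (A : nat -> zsqrt D) n k : compat A -> (n <= k)%N -> eqmod2 D n (A n) (A k).
Proof.
move=> A_compat; elim: k => [|k IH]; first by rewrite leqn0 => /eqP ->; apply: eqmod2_refl.
rewrite leq_eqVlt ltnS => /orP [/eqP -> | le_nk]; first exact: eqmod2_refl.
exact: eqmod2_trans (IH le_nk) (eqmod2_leq le_nk (A_compat k)).
Qed.

Section Hensel.
Variables (D : int) (m : nat) (A B : nat -> zsqrt D) (z0 : zsqrt D).
Hypotheses (m_odd : odd m) (A_compat : compat A) (B_compat : compat B).
Hypotheses (A_unit : zunit (A 3)) (z0_unit : zunit z0).

Let f n y := A n * y ^+ (2 * m) + B n.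

Hypothesis f_z0 : eqmod2 D 3 (f 3 z0) 0.

Lemma f_eqmod2 n k y : (n <= k)%N -> eqmod2 D n (f k y) (f n y).
Proof.
move=> le_nk; apply: eqmod2D; last exact/eqmod2_sym/compat_leq.
by apply: eqmod2M; [exact/eqmod2_sym/compat_leq | exact: eqmod2_refl].
Qed.

(* Newton's step y - f(y) / f'(y), where f'(y) = 2 w and w^-1 = w mod 2. *)
Definition hensel_step k y :=
  let e : zsqrt D := zdivexp2 (k + 3) (f (k + 4) y) in
  let w := A (k + 4) * m%:R * y ^+ (2 * m).-1 in
  y - 2 ^+ (k + 2) * (e * w).

Lemma hensel_step_spec k y : eqmod2 D (k + 3) (f (k + 3) y) 0 -> zunit y ->
  eqmod2 D (k + 4) (f (k + 4) (hensel_step k y)) 0 /\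
  eqmod2 D (k + 2) (hensel_step k y) y.
Proof.
move=> fy0 y_unit; rewrite /hensel_step.
set e : zsqrt D := zdivexp2 _ _; set w := _ * _ * _.
split; last by apply/eqmod2P; exists (- (e * w)); ring.
have fy : f (k + 4) y = 2 ^+ (k + 3) * e.
  by apply/zdivexp2K/(eqmod2_trans _ fy0)/f_eqmod2; rewrite leq_add2l.
have [g w2] : exists g, w * w = 1 + 2 * g.
  have A_unit' : zunit (A (k + 4)).
    by apply: zunit_eqmod2 A_unit; apply: eqmod2_leq (compat_leq _ _) => //; rewrite addn4.
  have /eqmod2P [g ->] := zunitM (zunitM A_unit' (zunit_odd D m_odd)) (zunitX (2 * m).-1 y_unit).
  by exists g; rewrite expr1.
rewrite /f; have [q ->] := exprD_first_order y (- (2 ^+ (k + 2) * (e * w))) (2 * m).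
apply/eqmod2P; exists (- (e * g) + 2 ^+ k * (A (k + 4) * (e * w) ^+ 2 * q)).
have -> : B (k + 4) = 2 ^+ (k + 3) * e - A (k + 4) * y ^+ (2 * m) by rewrite -fy /f; ring.
apply/eqP; rewrite -subr_eq0; apply/eqP.
transitivity (2 ^+ (k + 3) * e * (1 + 2 * g - w * w)); last by rewrite w2 subrr mulr0.
by rewrite /w natrM !exprD; ring.
Qed.

Fixpoint hensel_seq k := if k is k'.+1 then hensel_step k' (hensel_seq k') else z0.

Lemma hensel_seq_spec k :
  eqmod2 D (k + 3) (f (k + 3) (hensel_seq k)) 0 /\ eqmod2 D 1 (hensel_seq k) z0.
Proof.
elim: k => [|k [fy0 y_z0]]; first by split => //; apply: eqmod2_refl.
have [fy'0 y'_y] := hensel_step_spec fy0 (zunit_eqmod2 (eqmod2_sym y_z0) z0_unit).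
split; first by rewrite /= addSn -addnS.
by apply: eqmod2_trans y_z0; apply: eqmod2_leq y'_y; rewrite addn2.
Qed.

Lemma hensel_seq_compat : compat hensel_seq.
Proof.
move=> n; have [fy0 y_z0] := hensel_seq_spec n.
have [_ y'_y] := hensel_step_spec fy0 (zunit_eqmod2 (eqmod2_sym y_z0) z0_unit).
by apply/eqmod2_sym/(eqmod2_leq _ y'_y); rewrite leq_addr.
Qed.

Lemma hensel : exists y : Oelt, (forall n, eqmod2 D 1 (y n) z0) /\
  forall n, eqmod2 D n (A n * (y n : zsqrt D) ^+ (2 * m) + B n) 0.
Proof.
exists (Build_Oelt hensel_seq_compat); split=> n /=; first exact: (hensel_seq_spec n).2.
apply: eqmod2_trans (eqmod2_sym (f_eqmod2 _ (leq_addr 3 n))) _.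
exact: eqmod2_leq (leq_addr 3 n) (hensel_seq_spec n).1.
Qed.

End Hensel.

Definition residues8 : seq zsq :=
  [seq (a, b) | a <- map Posz (iota 0 8), b <- map Posz (iota 0 8)].
Definition red8 (x : zsq) : zsq := ((x.1 %% 8)%Z, (x.2 %% 8)%Z).
Definition unit_residues8 (D : int) : seq zsq :=
  [seq x <- residues8 | zcong 1 (zmul D x x) zone].
Fixpoint zexp8 (D : int) (t : zsq) (k : nat) : zsq :=
  if k is k'.+1 then red8 (zmul D t (zexp8 D t k')) else zone.
Definition unit_powers8 (D : int) (e : nat) : seq zsq :=
  undup [seq zexp8 D t e | t <- unit_residues8 D].

(* Subsets of residues8 are listed in the order of residues8, so that equal sets are equal lists. *)
Definition canon8 (s : seq zsq) : seq zsq := [seq x <- residues8 | x \in s].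
Definition scale8 (D : int) (u : zsq) (s : seq zsq) : seq zsq :=
  canon8 [seq red8 (zmul D u x) | x <- s].
Definition sum8 (s t : seq zsq) : seq zsq := canon8 [seq red8 (zadd x y) | x <- s, y <- t].

Definition pair_values8 (D : int) (e : nat) (u v : zsq) : seq zsq :=
  sum8 (scale8 D (red8 u) (unit_powers8 D e)) (scale8 D (red8 v) (unit_powers8 D e)).

Definition unit_classes8 (D : int) (e : nat) : seq (seq zsq) :=
  undup [seq scale8 D u (unit_powers8 D e) | u <- unit_residues8 D].

Definition congr2_sets (s t : seq zsq) : bool := all (fun x => all (zcong 1 x) t) s.

Definition all_pair_values8 (D : int) (e : nat) : seq (seq zsq) :=
  undup [seq sum8 st.1 st.2 | st <- [seq (s, t) | s <- unit_classes8 D e, t <- unit_classes8 D e]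
                            & congr2_sets st.1 st.2].

(* None stands for a pair of variables both set to 0. *)
Definition with_none (s : seq zsq) : seq (option zsq) := None :: map Some s.
Definition oval (o : option zsq) : zsq := if o is Some x then x else zzero.

Definition zero_sum8 (s1 s2 s3 : seq zsq) : bool :=
  has (fun o1 => has (fun o2 => has (fun o3 =>
    [|| o1 != None, o2 != None | o3 != None] &&
    (red8 (zadd (oval o1) (zadd (oval o2) (oval o3))) == zzero))
  (with_none s3)) (with_none s2)) (with_none s1).

Definition three_pairs_solvable8 (D : int) (e : nat) : bool :=
  let W := all_pair_values8 D e in all (fun s1 => all (fun s2 => all (zero_sum8 s1 s2) W) W) W.

Definition unit_exp8 (D : int) : bool := all (fun t => zexp8 D t 8 == zone) (unit_residues8 D).

Lemma mod8_computation :
  all (fun D => [&& three_pairs_solvable8 D 2, three_pairs_solvable8 D 6 & unit_exp8 D]) ramD.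
Proof. vm_cast_no_check (erefl true). Qed.

Section Mod8.
Variable D : int.
Implicit Types (x u v : zsqrt D) (a t : zsq).

Lemma red8_eqmod2 x : eqmod2 D 3 x (red8 x).
Proof.
apply/eqmod2P; exists ((x.1 %/ 8)%Z, (x.2 %/ 8)%Z).
rewrite -[_ * _]/(_ : zsq) zsqrt_exp2E zsqrt_mul_intE.
by case: x => x1 x2; congr pair; rewrite /= [LHS](divz_eq _ 8) addrC mulrC.
Qed.

Lemma red8_residues8 a : red8 a \in residues8.
Proof.
have mod8_mem (z : int) : (z %% 8)%Z \in map Posz (iota 0 8).
  have : (z %% 8 < 8)%Z by rewrite ltz_pmod.
  have : (0 <= z %% 8)%Z by rewrite modz_ge0.
  by case: (z %% 8)%Z => // n _ lt_n8; apply: map_f; rewrite mem_iota.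
by apply/allpairsP; exists ((a.1 %% 8)%Z, (a.2 %% 8)%Z); rewrite !mod8_mem.
Qed.

Lemma red8_unit x : zunit x -> red8 x \in unit_residues8 D.
Proof.
move=> x_unit; rewrite mem_filter red8_residues8 andbT.
have : zunit (red8 x : zsqrt D) by apply: zunit_eqmod2 x_unit; exact: eqmod2_leq (red8_eqmod2 x).
by [].
Qed.

Lemma unit_residues8_zunit t : t \in unit_residues8 D -> zunit (t : zsqrt D).
Proof. by rewrite mem_filter => /andP []. Qed.

Lemma zexp8_eqmod2 x k : eqmod2 D 3 (x ^+ k) (zexp8 D x k).
Proof.
elim: k => [|k IH]; first exact: eqmod2_refl.
by rewrite exprS; apply: eqmod2_trans (red8_eqmod2 _); apply: eqmod2M (eqmod2_refl _ _) IH.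
Qed.

Lemma unit_exp_mod8 x k : unit_exp8 D -> x \in unit_residues8 D ->
  eqmod2 D 3 (x ^+ k) (x ^+ (k %% 8)).
Proof.
move=> /allP exp8 x_res; have /eqP zexp8_x := exp8 x x_res.
have x8 : eqmod2 D 3 (x ^+ 8) 1 by rewrite -[1]/(zone : zsqrt D) -zexp8_x zexp8_eqmod2.
rewrite {1}(divn_eq k 8) exprD mulnC exprM -[X in eqmod2 _ _ _ X]mul1r.
by apply: eqmod2M (eqmod2_refl _ _); rewrite -(expr1n _ (k %/ 8)); apply: eqmod2X.
Qed.

Lemma mem_unit_class8 e u a : a \in scale8 D (red8 u) (unit_powers8 D e) ->
  exists2 t, t \in unit_residues8 D & eqmod2 D 3 a (u * (t : zsqrt D) ^+ e).
Proof.
rewrite mem_filter => /andP [/mapP [_ /[!mem_undup] /mapP [t t_res ->] ->] _].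
exists t => //; apply: eqmod2_trans (eqmod2_sym (red8_eqmod2 _)) _.
apply: eqmod2M; first exact/eqmod2_sym/red8_eqmod2.
exact/eqmod2_sym/zexp8_eqmod2.
Qed.

Lemma unit_class8_eqmod2 k u a : a \in scale8 D (red8 u) (unit_powers8 D (2 * k)) ->
  eqmod2 D 1 a u.
Proof.
case/mem_unit_class8 => t /unit_residues8_zunit t_unit /(eqmod2_leq (isT : 1 <= 3)%N) a_ut.
apply: eqmod2_trans a_ut _; rewrite -[X in eqmod2 _ _ _ X]mulr1.
apply: eqmod2M (eqmod2_refl _ _) _.
by rewrite exprM -(expr1n _ k); apply: eqmod2X; rewrite expr2.
Qed.

Lemma mem_all_pair_values8 e (s t : seq zsq) : s \in unit_classes8 D e -> t \in unit_classes8 D e ->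
  congr2_sets s t -> sum8 s t \in all_pair_values8 D e.
Proof.
move=> s_cl t_cl st; rewrite mem_undup.
apply: (map_f (fun st : seq zsq * seq zsq => sum8 st.1 st.2) (x := (s, t))).
by rewrite mem_filter st allpairs_f.
Qed.

Lemma pair_values8_mem k u v : zunit u -> zunit v -> eqmod2 D 1 u v ->
  pair_values8 D (2 * k) u v \in all_pair_values8 D (2 * k).
Proof.
move=> u_unit v_unit uv; apply: mem_all_pair_values8.
- by rewrite mem_undup; apply/map_f/red8_unit.
- by rewrite mem_undup; apply/map_f/red8_unit.
apply/allP => a a_u; apply/allP => b b_v.
have : eqmod2 D 1 a b.
  apply: eqmod2_trans (unit_class8_eqmod2 a_u) _.
  exact: eqmod2_trans uv (eqmod2_sym (unit_class8_eqmod2 b_v)).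
by [].
Qed.

Lemma with_none_pair_values8 m u v o : unit_exp8 D -> odd m ->
  o \in with_none (pair_values8 D (2 * (m %% 4)) u v) ->
  exists z z' : zsqrt D, (o != None -> zunit z) /\
    eqmod2 D 3 (oval o) (u * z ^+ (2 * m) + v * z' ^+ (2 * m)).
Proof.
move=> exp8 m_odd; rewrite muln_modr inE => /orP [/eqP -> | /mapP [a a_val ->]].
  exists 0, 0; split => //=.
  rewrite expr0n muln_eq0 /= (negbTE (lt0n_neq0 (odd_gt0 m_odd))) !mulr0 addr0.
  exact: eqmod2_refl.
move: a_val; rewrite mem_filter => /andP [/allpairsP [[b c] [/= b_u c_v ->]] _].
have [t t_res b_ut] := mem_unit_class8 b_u.
have [t' t'_res c_vt'] := mem_unit_class8 c_v.
exists t, t'; split => [_ | /=]; first exact: unit_residues8_zunit.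
apply: eqmod2_trans (eqmod2_sym (red8_eqmod2 _)) _.
apply: eqmod2D.
  apply: eqmod2_trans b_ut _; apply: eqmod2M (eqmod2_refl _ _) _.
  exact/eqmod2_sym/unit_exp_mod8.
apply: eqmod2_trans c_vt' _; apply: eqmod2M (eqmod2_refl _ _) _.
exact/eqmod2_sym/unit_exp_mod8.
Qed.

End Mod8.

Lemma odd_mod4 m : odd m -> (m %% 4 = 1 \/ m %% 4 = 3)%N.
Proof.
have : odd (m %% 4) = odd m by rewrite odd_mod.
by case: (m %% 4)%N (ltn_mod m 4) => [|[|[|[|]]]] // _ <-; auto.
Qed.

Lemma three_pairs_zero_mod8 D m (u : 'I_3 * bool -> zsqrt D) :
  D \in ramD -> odd m -> (forall p, zunit (u p)) ->
  (forall i, eqmod2 D 1 (u (i, true)) (u (i, false))) ->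
  exists (z : 'I_3 * bool -> zsqrt D) (i : 'I_3),
    zunit (z (i, true)) /\ eqmod2 D 3 (\sum_p u p * z p ^+ (2 * m)) 0.
Proof.
move=> D_ram m_odd u_unit u_pairs.
have /and3P [solv2 solv6 exp8] := allP mod8_computation D D_ram.
have solv : three_pairs_solvable8 D (2 * (m %% 4)).
  by case: (odd_mod4 m_odd) => ->; [exact: solv2 | exact: solv6].
pose W i := pair_values8 D (2 * (m %% 4)) (u (i, true)) (u (i, false)).
have W_mem i : W i \in all_pair_values8 D (2 * (m %% 4)).
  exact: pair_values8_mem (u_unit _) (u_unit _) (u_pairs i).
pose i0 : 'I_3 := ord0; pose i1 : 'I_3 := lift ord0 ord0.
pose i2 : 'I_3 := lift ord0 (lift ord0 ord0).
have := allP solv _ (W_mem i0) => /allP /(_ _ (W_mem i1)) /allP /(_ _ (W_mem i2)).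
case/hasP => [o0 /(with_none_pair_values8 exp8 m_odd) [z0 [z0' [z0_unit E0]]]].
case/hasP => [o1 /(with_none_pair_values8 exp8 m_odd) [z1 [z1' [z1_unit E1]]]].
case/hasP => [o2 /(with_none_pair_values8 exp8 m_odd) [z2 [z2' [z2_unit E2]]]].
case/andP => some_o /eqP sum_o.
pose z (p : 'I_3 * bool) := nth 0 (if p.2 then [:: z0; z1; z2] else [:: z0'; z1'; z2']) p.1.
exists z.
have [i zi_unit] : exists i : 'I_3, zunit (nth 0 [:: z0; z1; z2] i).
  by case/or3P: some_o => [/z0_unit | /z1_unit | /z2_unit]; [exists i0 | exists i1 | exists i2].
exists i; split => //.
rewrite (eq_bigr (fun p => u (p.1, p.2) * z (p.1, p.2) ^+ (2 * m))); last by case.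
rewrite -(pair_bigA _ (fun i b => u (i, b) * z (i, b) ^+ (2 * m))).
rewrite !big_ord_recl big_ord0 !big_bool /= addr0.
apply: eqmod2_trans (eqmod2_sym (eqmod2D E0 (eqmod2D E1 E2))) _.
by apply: eqmod2_trans (red8_eqmod2 _) _; rewrite sum_o; apply: eqmod2_refl.
Qed.

Lemma compat_cst D (z : zsqrt D) : compat (fun=> z).
Proof. by move=> n; apply: eqmod2_refl. Qed.

Lemma compat_scale D (c : zsqrt D) (W : nat -> zsqrt D) : compat W -> compat (fun n => c * W n).
Proof. by move=> W_compat n; apply: eqmod2M (eqmod2_refl _ _) (W_compat n). Qed.

Lemma unit_form_zero_lift D m (I : finType) (V : I -> nat -> zsqrt D) (z : I -> zsqrt D) j :
  odd m -> (forall i, compat (V i)) -> zunit (V j 3) -> zunit (z j) ->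
  eqmod2 D 3 (\sum_i V i 3 * z i ^+ (2 * m)) 0 ->
  exists W : I -> nat -> zsqrt D, [/\ forall i, compat (W i), forall n, zunit (W j n)
    & forall n, eqmod2 D n (\sum_i V i n * W i n ^+ (2 * m)) 0].
Proof.
move=> m_odd V_compat Vj_unit zj_unit sum0.
pose B n := \sum_(i | i != j) V i n * z i ^+ (2 * m).
have B_compat : compat B.
  move=> n; apply: (big_ind2 (fun x y => eqmod2 D n x y)) => [|x1 x2 y1 y2|i _].
  - exact: eqmod2_refl.
  - exact: eqmod2D.
  - exact: eqmod2M (V_compat i n) (eqmod2_refl _ _).
have [|y [y_zj y_root]] := hensel m_odd (V_compat j) B_compat Vj_unit zj_unit.
  by rewrite (bigD1 j) in sum0.
exists (fun i n => if i == j then y n else z i); split => [i | n | n].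
- by case: (i == j); [apply: app_compat | apply: compat_cst].
- by rewrite eqxx; apply: zunit_eqmod2 (eqmod2_sym (y_zj n)) zj_unit.
rewrite (bigD1 j) //= eqxx.
rewrite (eq_bigr (fun i => V i n * z i ^+ (2 * m))) => [|i /negbTE -> //].
exact: y_root.
Qed.

Lemma sum_codom_inj (R : nmodType) (I J : finType) (h : I -> J) (G : J -> R) :
  injective h -> (forall j, j \notin codom h -> G j = 0) -> \sum_j G j = \sum_i G (h i).
Proof.
move=> h_inj G0; rewrite (bigID (mem (codom h))) /= [X in _ + X]big1 ?addr0 //.
have uniq_h : uniq (codom h) by rewrite map_inj_uniq ?enum_uniq.
by rewrite -(big_uniq _ uniq_h) big_image.
Qed.

Lemma common_level (I : finType) (r : I -> nat) d l : (forall i, r i %% d = l)%N ->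
  exists (R : nat) (e : I -> nat), forall i, (r i + e i * d)%N = R.
Proof.
move=> r_l; pose Q := (\sum_i r i %/ d)%N.
exists (l + Q * d)%N, (fun i => Q - r i %/ d)%N => i.
have le_Q : (r i %/ d <= Q)%N by rewrite /Q (bigD1 i) //= leq_addr.
by rewrite {1}(divn_eq (r i) d) r_l addnAC -mulnDl subnKC // addnC.
Qed.

Definition unif_eps (D : int) : zsq :=
  if D == -1 then (0, 1) else if D == -5 then (-2, 1) else ((D %/ 2)%Z, 0).

Lemma unif_computation : all (fun D =>
  [&& zexp D (unif D) 2 == zmul D (2, 0) (unif_eps D),
      zcong 1 (zmul D (unif_eps D) (unif_eps D)) zone
    & zcong 1 (zmul D (zadd zone (unif D)) (zadd zone (unif D))) zone]) ramD.
Proof. by vm_compute. Qed.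

Section Uniformizer.
Variables (D : int) (D_ram : D \in ramD).
Local Notation pi := (unif D : zsqrt D).

Lemma unif_sqr : pi ^+ 2 = 2 * (unif_eps D : zsqrt D).
Proof. by have /and3P [/eqP pi2 _ _] := allP unif_computation D D_ram; rewrite -zexpE pi2. Qed.

Lemma zunit_unif_eps : zunit (unif_eps D : zsqrt D).
Proof. by have /and3P [] := allP unif_computation D D_ram. Qed.

Lemma zunit_1_unif (c : bool) : zunit (1 + (if c then pi else 0)).
Proof.
by case: c; [have /and3P [] := allP unif_computation D D_ram | rewrite addr0 zunit1].
Qed.

Lemma unif_exp_unit_nonzero e (w : nat -> zsqrt D) : (forall n, zunit (w n)) ->
  ~ (forall n, eqmod2 D n (pi ^+ e * w n) 0).
Proof.
move=> w_unit /(_ e.+1) /(eqmod2M (eqmod2_refl _ (pi ^+ e))).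
rewrite mulr0 mulrA -exprD addnn -mul2n exprM unif_sqr exprMn -mulrA.
move/eqmod2_exp2_cancel; apply/negP/zunit_neq0.
by apply: zunitM; [apply/zunitX/zunit_unif_eps | apply: w_unit].
Qed.

Lemma level_coef_unit_part d (a : Oelt) l c : level_coef D d a l c ->
  exists (r : nat) (V : nat -> zsqrt D), [/\ (r %% d)%N = l, compat V,
    forall n, eqmod2 D n (a n) (pi ^+ r * V n)
    & forall n, eqmod2 D 1 (V n) (1 + (if c then pi else 0))].
Proof.
case=> r [w [r_l a_eq]].
exists r, (fun n => 1 + (if c then pi else 0) + pi ^+ 2 * (w n : zsqrt D)); split => // [n|n|n].
- by apply: eqmod2D (eqmod2_refl _ _) _; apply: compat_scale; apply: app_compat.
- by have := a_eq n; rewrite /eqmod2 -!zexpE.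
by apply/eqmod2P; exists ((unif_eps D : zsqrt D) * w n); rewrite unif_sqr; ring.
Qed.

Lemma zero_from_unit_form (I : finType) s (a : 'I_s -> Oelt) (idx : I -> 'I_s) d l
    (r : I -> nat) (V W : I -> nat -> zsqrt D) (j : I) :
  injective idx -> (0 < d)%N -> (forall i, (r i %% d)%N = l) ->
  (forall i n, eqmod2 D n (a (idx i) n) (pi ^+ r i * V i n)) ->
  (forall i, compat (W i)) -> (forall n, zunit (W j n)) ->
  (forall n, eqmod2 D n (\sum_i V i n * W i n ^+ d) 0) ->
  nontriv_zero D d a.
Proof.
move=> idx_inj d_gt0 r_l a_eq W_compat Wj_unit W_root.
have [R [e level_R]] := common_level r_l.
pose X i := Build_Oelt (compat_scale (pi ^+ e i) (W_compat i)).
pose x k := if [pick i | idx i == k] is Some i then X i else Build_Oelt (compat_cst (0 : zsqrt D)).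
have x_idx i : x (idx i) = X i.
  by rewrite /x; case: pickP => [i' /eqP /idx_inj -> // | /(_ i)]; rewrite eqxx.
exists x; split.
  by exists (idx j); rewrite x_idx; apply: (unif_exp_unit_nonzero (w := W j)).
move=> n; change (eqmod2 D n (formval D d a x n) 0).
have -> : formval D d a x n = \sum_k (a k n : zsqrt D) * (x k n : zsqrt D) ^+ d.
  by apply: eq_bigr => k _; rewrite zexpE.
rewrite (sum_codom_inj idx_inj); last first.
  move=> k k_idx; rewrite /x; case: pickP => [i /eqP ki | _ /=].
    by rewrite -ki codom_f in k_idx.
  by rewrite expr0n eqn0Ngt d_gt0 mulr0.
apply: (@eqmod2_trans _ _ _ (pi ^+ R * \sum_i V i n * W i n ^+ d)); last first.
  by rewrite -[X in eqmod2 _ _ _ X](mulr0 (pi ^+ R)); apply: eqmod2M (eqmod2_refl _ _) (W_root n).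
rewrite mulr_sumr; apply: (big_ind2 (fun x y => eqmod2 D n x y)) => [|x1 x2 y1 y2|i _].
- exact: eqmod2_refl.
- exact: eqmod2D.
rewrite x_idx /=; apply: eqmod2_trans (eqmod2M (a_eq i n) (eqmod2_refl _ _)) _.
by rewrite -(level_R i) exprD exprMn -exprM; apply/eqmod2P; exists 0; ring.
Qed.

End Uniformizer.

Lemma paired_coefs_zero D m s (a : 'I_s -> Oelt) (idx : 'I_3 * bool -> 'I_s) (c : 'I_3 -> bool) l :
  D \in ramD -> odd m -> injective idx ->
  (forall p, level_coef D (2 * m) (a (idx p)) l (c p.1)) -> nontriv_zero D (2 * m) a.
Proof.
move=> D_ram m_odd idx_inj a_level.
have [r /fin_all_exists [V /all_and4 [r_l V_compat a_eq V_c]]] :=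
  fin_all_exists (fun p => level_coef_unit_part D_ram (a_level p)).
have V_unit p : zunit (V p 3) by apply: zunit_eqmod2 (eqmod2_sym (V_c p 3)) (zunit_1_unif D_ram _).
have [|z [i [zi_unit z_root]]] := three_pairs_zero_mod8 D_ram m_odd V_unit.
  by move=> i; apply: eqmod2_trans (V_c (i, true) 3) (eqmod2_sym (V_c (i, false) 3)).
have [W [W_compat Wi_unit W_root]] := unit_form_zero_lift m_odd V_compat (V_unit _) zi_unit z_root.
have d_gt0 : (0 < 2 * m)%N by rewrite muln_gt0 (odd_gt0 m_odd).
exact: (zero_from_unit_form D_ram idx_inj d_gt0 r_l a_eq W_compat Wi_unit W_root).
Qed.

Lemma monochromatic_pair (T : eqType) (c : T -> bool) (s : seq T) : (3 <= size s)%N ->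
  exists p q r, c p = c q /\ perm_eq s [:: p, q & r].
Proof.
case: s => [|x [|y [|z r]]] // _.
case: (eqVneq (c x) (c y)) => [cxy | ncxy]; first by exists x, y, (z :: r).
case: (eqVneq (c x) (c z)) => [cxz | ncxz].
  exists x, z, (y :: r); split => //.
  by rewrite perm_cons; exact: permEl (perm_catCA [:: y] [:: z] r).
exists y, z, (x :: r); split; last exact: permEl (perm_catCA [:: x] [:: y; z] r).
by move: ncxy ncxz; case: (c x); case: (c y); case: (c z).
Qed.

Lemma monochromatic_pairs3 (T : eqType) (c : T -> bool) (s : seq T) :
  uniq s -> (7 <= size s)%N ->
  exists p1 q1 p2 q2 p3 q3, uniq [:: p1; q1; p2; q2; p3; q3] /\
    [/\ c p1 = c q1, c p2 = c q2 & c p3 = c q3].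
Proof.
move=> s_uniq s_size.
have [p1 [q1 [r1 [c1 s_r1]]]] := monochromatic_pair c (leq_trans (isT : 3 <= 7)%N s_size).
have r1_size : (5 <= size r1)%N by move: s_size; rewrite (perm_size s_r1).
have [p2 [q2 [r2 [c2 r1_r2]]]] := monochromatic_pair c (leq_trans (isT : 3 <= 5)%N r1_size).
have r2_size : (3 <= size r2)%N by move: r1_size; rewrite (perm_size r1_r2).
have [p3 [q3 [r3 [c3 r2_r3]]]] := monochromatic_pair c r2_size.
exists p1, q1, p2, q2, p3, q3; split => //.
have s_perm : perm_eq s ([:: p1; q1; p2; q2; p3; q3] ++ r3).
  apply: (perm_trans s_r1); rewrite /= !perm_cons.
  by apply: (perm_trans r1_r2); rewrite !perm_cons.
by move: s_uniq; rewrite (perm_uniq s_perm) cat_uniq => /andP [].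
Qed.

Definition pair_slot (p : 'I_3 * bool) : nat := ~~ p.2 + p.1.*2.

Lemma nth_pair_slot_inj (T : eqType) (x0 : T) (s : seq T) : uniq s -> size s = 6%N ->
  injective (fun p => nth x0 s (pair_slot p)).
Proof.
move=> s_uniq s_size [i b] [j b'] /eqP.
have slot_lt k c : (pair_slot (k, c) < size s)%N.
  by rewrite s_size; case: c; case: k => [[|[|[|k]]] Hk].
rewrite nth_uniq ?slot_lt // /pair_slot /= => /eqP E.
have := congr1 half E; rewrite !half_bit_double => /val_inj ->.
by have := congr1 odd E; rewrite !oddD !odd_double !addbF !oddb => /negb_inj ->.
Qed.

Lemma three_pairs_zero D m s (a : 'I_s -> Oelt) : D \in ramD -> odd m ->
  (exists (l : nat) (i1 i2 i3 i4 i5 i6 : 'I_s) (c1 c2 c3 : bool),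
      uniq [:: i1; i2; i3; i4; i5; i6] /\
      level_coef D (2 * m) (a i1) l c1 /\ level_coef D (2 * m) (a i2) l c1 /\
      level_coef D (2 * m) (a i3) l c2 /\ level_coef D (2 * m) (a i4) l c2 /\
      level_coef D (2 * m) (a i5) l c3 /\ level_coef D (2 * m) (a i6) l c3) ->
  nontriv_zero D (2 * m) a.
Proof.
move=> D_ram m_odd [l [i1 [i2 [i3 [i4 [i5 [i6 [c1 [c2 [c3 [i_uniq a_level]]]]]]]]]]].
case: a_level => [a1 [a2 [a3 [a4 [a5 a6]]]]].
apply: (paired_coefs_zero (c := fun k => nth false [:: c1; c2; c3] k) (l := l) D_ram m_odd
  (nth_pair_slot_inj (x0 := i1) i_uniq erefl)).
by case=> [[[|[|[|k]]] Hk] []] /=.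
Qed.

Theorem lemma9 (D : int) (m s : nat) (a : 'I_s -> Oelt) :
  D \in ramD -> odd m -> (3 <= m)%N ->
  (forall i, Ononzero (a i)) ->
  ((exists (l : nat) (i1 i2 i3 i4 i5 i6 : 'I_s) (c1 c2 c3 : bool),
      uniq [:: i1; i2; i3; i4; i5; i6] /\
      level_coef D (2 * m) (a i1) l c1 /\ level_coef D (2 * m) (a i2) l c1 /\
      level_coef D (2 * m) (a i3) l c2 /\ level_coef D (2 * m) (a i4) l c2 /\
      level_coef D (2 * m) (a i5) l c3 /\ level_coef D (2 * m) (a i6) l c3) ->
    nontriv_zero D (2 * m) a) /\
  ((exists (l : nat) (j : 'I_7 -> 'I_s),
      injective j /\ forall k, at_level D (2 * m) (a (j k)) l) ->
    nontriv_zero D (2 * m) a).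
Proof.
move=> D_ram m_odd _ _; split; first exact: three_pairs_zero.
case=> l [j [j_inj j_level]].
have [c j_c] := fin_all_exists j_level.
have [p1 [q1 [p2 [q2 [p3 [q3 [p_uniq [c1 c2 c3]]]]]]]] :=
  monochromatic_pairs3 c (enum_uniq 'I_7) (eq_leq (esym (size_enum_ord 7))).
apply: three_pairs_zero => //.
exists l, (j p1), (j q1), (j p2), (j q2), (j p3), (j q3), (c p1), (c p2), (c p3).
rewrite {2}c1 {2}c2 {2}c3.
by split; [rewrite -(map_inj_uniq j_inj) in p_uniq | do !split; apply: j_c].
Qed.
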